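(* Let $T$ be a CPTP map on $\mathfrak{H}(\mathcal{H})$, $\mathcal{H}=\mathcal{H}_S\oplus\mathcal{H}_R$ orthogonal, with $\mathcal{H}_S=\bigoplus_{i=1}^K\mathcal{H}_{S_i}$ an orthogonal decomposition into invariant subspaces, and assume moreover that $\mathcal{H}_S$ is GAS. Then $\mathrm{id}-T_R$ is invertible on $\mathfrak{H}_R$ and for every density operator $\rho$ and every $i$, $$\lim_{n\to\infty}\mathrm{Tr}(\Pi_{S_i}T^n(\rho))=\mathrm{Tr}(\Pi_{S_i}\rho_S)+\mathrm{Tr}\big(\Pi_{S_i}\,T_{SR}\big((\mathrm{id}-T_R)^{-1}(\rho_R)\big)\big),$$ where $\rho_S=\Pi_S\rho\Pi_S$ and $\rho_R=\Pi_R\rho\Pi_R$.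
   Context: $\mathcal{H}$ is a finite-dimensional complex Hilbert space; $T$ is CPTP: $T(\rho)=\sum_kM_k\rho M_k^\dagger$, $\sum_kM_k^\dagger M_k=I$. A subspace is invariant for $T$ if every PSD $\rho$ supported in it is mapped to an operator supported in it. $\Pi_S,\Pi_R,\Pi_{S_i}$ are the orthogonal projections onto $\mathcal{H}_S,\mathcal{H}_R,\mathcal{H}_{S_i}$. An invariant $\mathcal{H}_S$ is GAS if $\lim_n\|T^n(\rho)-\Pi_ST^n(\rho)\Pi_S\|=0$ for every density operator $\rho$. $\mathfrak{H}_R$ denotes the Hermitian operators $A$ with $A=\Pi_RA\Pi_R$; $T_R:\mathfrak{H}_R\to\mathfrak{H}_R$, $T_R(A)=\Pi_RT(A)\Pi_R$; $T_{SR}:\mathfrak{H}_R\to$ (Hermitian operators supported on $\mathcal{H}_S$), $T_{SR}(A)=\Pi_ST(A)\Pi_S$. *)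

(* Finite-dimensional complex Hilbert space H = C^n,
   operators = n x n matrices over a numClosedFieldType C (e.g. algC). *)
From HB Require Import structures.
From mathcomp Require Import all_boot all_order all_algebra.
Set Implicit Arguments. Unset Strict Implicit. Unset Printing Implicit Defensive.
Import Order.TTheory GRing.Theory Num.Theory.
Local Open Scope ring_scope.

Section QDefs.
Variables (C : numClosedFieldType) (n : nat).

Definition adj (m p : nat) (A : 'M[C]_(m, p)) : 'M[C]_(p, m) :=
  (map_mx (fun z => z^*) A)^T.

Definition hermitian (A : 'M[C]_n) : Prop := adj A = A.

Definition psd (A : 'M[C]_n) : Prop :=
  hermitian A /\ forall v : 'cV[C]_n, 0 <= (adj v *m A *m v) 0 0.

Definition density (rho : 'M[C]_n) : Prop := psd rho /\ \tr rho = 1.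

Definition orth_proj (P : 'M[C]_n) : Prop := hermitian P /\ P *m P = P.

(* CPTP map given by a finite family of Kraus operators *)
Definition kraus_TP (Ms : seq 'M[C]_n) : Prop :=
  \sum_(M <- Ms) adj M *m M = 1%:M.

Definition kraus_map (Ms : seq 'M[C]_n) (rho : 'M[C]_n) : 'M[C]_n :=
  \sum_(M <- Ms) M *m rho *m adj M.

Definition supported_in (P A : 'M[C]_n) : Prop := P *m A *m P = A.

Definition invariant_subspace (T : 'M[C]_n -> 'M[C]_n) (P : 'M[C]_n) : Prop :=
  forall rho, psd rho -> supported_in P rho -> supported_in P (T rho).

Definition cvg_to (u : nat -> C) (l : C) : Prop :=
  forall eps : C, 0 < eps -> exists N : nat, forall m, (N <= m)%N -> `|u m - l| < eps.

(* convergence of matrix sequences (entrywise; all norms are equivalent in finite dim) *)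
Definition mx_cvg_to (u : nat -> 'M[C]_n) (L : 'M[C]_n) : Prop :=
  forall i j, cvg_to (fun m => u m i j) (L i j).

Definition GAS (T : 'M[C]_n -> 'M[C]_n) (P : 'M[C]_n) : Prop :=
  forall rho, density rho ->
    mx_cvg_to (fun m => iter m T rho - P *m iter m T rho *m P) 0.

Definition in_HR (PR A : 'M[C]_n) : Prop := hermitian A /\ supported_in PR A.
Definition T_R (T : 'M[C]_n -> 'M[C]_n) (PR A : 'M[C]_n) : 'M[C]_n := PR *m T A *m PR.
Definition T_SR (T : 'M[C]_n -> 'M[C]_n) (PS A : 'M[C]_n) : 'M[C]_n := PS *m T A *m PS.

Definition id_minus_TR_invertible (T : 'M[C]_n -> 'M[C]_n) (PR : 'M[C]_n) : Prop :=
  forall B, in_HR PR B ->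
    exists X, [/\ in_HR PR X, X - T_R T PR X = B &
      forall Y, in_HR PR Y -> Y - T_R T PR Y = B -> Y = X].

End QDefs.

From Pilot Require Import Defs.
From HB Require Import structures.
From mathcomp Require Import all_boot all_order all_algebra.
From mathcomp Require Import ring.
Set Implicit Arguments. Unset Strict Implicit. Unset Printing Implicit Defensive.
Import Order.TTheory GRing.Theory Num.Theory.
Local Open Scope ring_scope.

(* Invariance of each H_{S_i} forces every Kraus operator to satisfy
   M P_i = P_i M P_i.  Hence the H_R-block evolves autonomously,
   Pi_R T^m(A) Pi_R = T_R^m(Pi_R A Pi_R), and in the Heisenberg picture
   T^*(P_i) = P_i + Pi_R T^*(P_i) Pi_R, i.e.
   Tr(P_i T(A)) = Tr(P_i A) + Tr(P_i T(Pi_R A Pi_R)).  With X - T_R(X) = rho_R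
   the traces telescope:
   Tr(P_i T^m(rho)) = Tr(P_i rho) + Tr(P_i T(X)) - Tr(P_i T(T_R^m(X))).
   GAS says that T_R^m vanishes on density operators, hence by polarization on
   all operators supported in H_R; this kills the last term and shows that
   id - T_R has no fixed points, so it is invertible. *)

Section ConjugateTranspose.
Variable C : numClosedFieldType.

Lemma adj_is_zmod_morphism m p : zmod_morphism (@adj C m p).
Proof. by move=> A B; apply/matrixP=> i j; rewrite !mxE rmorphB. Qed.

HB.instance Definition _ m p :=
  GRing.isZmodMorphism.Build _ _ (@adj C m p) (@adj_is_zmod_morphism m p).

Lemma adjK m p (A : 'M[C]_(m, p)) : adj (adj A) = A.
Proof. by apply/matrixP=> i j; rewrite !mxE conjCK. Qed.

Lemma adjM m p q (A : 'M[C]_(m, p)) (B : 'M[C]_(p, q)) :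
  adj (A *m B) = adj B *m adj A.
Proof. by rewrite /adj map_mxM trmx_mul. Qed.

Lemma adjZ m p a (A : 'M[C]_(m, p)) : adj (a *: A) = a^* *: adj A.
Proof. by rewrite /adj map_mxZ linearZ. Qed.

Lemma adj1 m : adj (1%:M : 'M[C]_m) = 1%:M.
Proof. by rewrite /adj map_mx1 trmx1. Qed.

Lemma adj_delta m p (i : 'I_m) (j : 'I_p) :
  adj (delta_mx i j : 'M[C]_(m, p)) = delta_mx j i.
Proof. by rewrite /adj map_delta_mx trmx_delta. Qed.

Lemma mul_adj_diag_ge0 m p (A : 'M[C]_(m, p)) i : 0 <= (A *m adj A) i i.
Proof. by rewrite mxE sumr_ge0 // => k _; rewrite !mxE -normCK exprn_ge0. Qed.

Lemma mxtrace_mul_adj_ge0 m p (A : 'M[C]_(m, p)) : 0 <= \tr (A *m adj A).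
Proof. by apply: sumr_ge0 => i _; apply: mul_adj_diag_ge0. Qed.

Lemma mxtrace_mul_adj_eq0 m p (A : 'M[C]_(m, p)) : \tr (A *m adj A) = 0 -> A = 0.
Proof.
move=> trA0; apply/matrixP=> i k; rewrite mxE.
have /(_ i isT) := psumr_eq0P (fun i _ => mul_adj_diag_ge0 A i) trA0.
have sq_ge0 l : 0 <= A i l * adj A l i by rewrite !mxE -normCK exprn_ge0.
rewrite mxE => /psumr_eq0P /(_ k isT); rewrite !mxE -normCK.
by move=> /(_ (fun l _ => sq_ge0 l)) /eqP; rewrite expf_eq0 normr_eq0 => /eqP.
Qed.

Lemma psd_mul_adj n p (A : 'M[C]_(n, p)) : psd (A *m adj A).
Proof.
split=> [|v]; first by rewrite /Defs.hermitian adjM adjK.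
have -> : adj v *m (A *m adj A) *m v = (adj v *m A) *m adj (adj v *m A).
  by rewrite adjM adjK !mulmxA.
exact: mul_adj_diag_ge0.
Qed.

Lemma outer_polarization n (u w : 'cV[C]_n) :
  2%:R *: (u *m adj w) =
    (u + w) *m adj (u + w) - u *m adj u - w *m adj w
    + 'i *: ((u + 'i *: w) *m adj (u + 'i *: w) - u *m adj u - w *m adj w).
Proof.
have conjD (x y : C) : (x + y)^* = x^* + y^* by rewrite rmorphD.
have conjM (x y : C) : (x * y)^* = x^* * y^* by rewrite rmorphM.
apply/matrixP=> a b; rewrite !mxE !big_ord1 !mxE /= !conjD conjM conjCi.
move: (u a 0) (w b 0) (w a 0) (u b 0) => x y z v.
(* [ring] does not know ['i ^+ 2 = -1], so the difference is factored by hand. *)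
apply/eqP; rewrite -subr_eq0; apply/eqP.
transitivity ((1 + 'i ^+ 2) * (x * y^* - z * v^* + 'i * z * y^*)); first by ring.
by rewrite sqrCi addrN mul0r.
Qed.

End ConjugateTranspose.

Section OrthogonalProjections.
Variables (C : numClosedFieldType) (n : nat).

Lemma orth_proj_compl (Q : 'M[C]_n) : orth_proj Q -> orth_proj (1%:M - Q).
Proof.
move=> [Q_herm Q_idem]; split; first by rewrite /Defs.hermitian raddfB /= adj1 Q_herm.
by rewrite mulmxBl mul1mx mulmxBr mulmx1 Q_idem subrr subr0.
Qed.

Lemma compl_mul_proj (Q : 'M[C]_n) : orth_proj Q -> (1%:M - Q) *m Q = 0.
Proof. by move=> [_ Q_idem]; rewrite mulmxBl mul1mx Q_idem subrr. Qed.

Variables (I : finType) (P : I -> 'M[C]_n).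
Hypotheses (P_proj : forall i, orth_proj (P i))
  (P_orth : forall i j, i != j -> P i *m P j = 0).

Lemma sum_proj_mul i : (\sum_j P j) *m P i = P i.
Proof.
rewrite mulmx_suml (bigD1 i) //= (P_proj i).2 big1 ?addr0 // => j.
exact: P_orth.
Qed.

Lemma mul_sum_proj i : P i *m (\sum_j P j) = P i.
Proof.
rewrite mulmx_sumr (bigD1 i) //= (P_proj i).2 big1 ?addr0 // => j ji.
by apply: P_orth; rewrite eq_sym.
Qed.

Lemma orth_proj_sum : orth_proj (\sum_i P i).
Proof.
split; first by rewrite /Defs.hermitian raddf_sum; apply: eq_bigr => i _; exact: (P_proj i).1.
by rewrite mulmx_sumr; apply: eq_bigr => i _; apply: sum_proj_mul.
Qed.

End OrthogonalProjections.

Lemma linear_surj_of_inj (F : fieldType) m p (f : {linear 'M[F]_(m, p) -> 'M[F]_(m, p)}) :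
  injective f -> forall B, exists A, f A = B.
Proof.
move=> f_inj B.
have lin_f_unit : lin_mx f \in unitmx.
  rewrite -row_free_unit; apply: inj_row_free => v fv0.
  apply/eqP; rewrite -[v]vec_mxK mxvec_eq0; apply/eqP/f_inj; rewrite linear0.
  by apply/eqP; rewrite -mxvec_eq0 -mul_vec_lin vec_mxK fv0.
exists (vec_mx (mxvec B *m invmx (lin_mx f))).
by apply: (can_inj mxvecK); rewrite -mul_vec_lin vec_mxK mulmxKV.
Qed.

Section LinearMaps.
Variables (C : numClosedFieldType) (n : nat).

Lemma iter_is_linear (f : {linear 'M[C]_n -> 'M[C]_n}) m : linear (iter m f).
Proof. by elim: m => [|m IHm] a A B //=; rewrite IHm linearP. Qed.

HB.instance Definition _ (f : {linear 'M[C]_n -> 'M[C]_n}) m :=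
  GRing.isLinear.Build C _ _ *:%R (iter m f) (iter_is_linear f m).

Lemma T_R_is_linear (T : {linear 'M[C]_n -> 'M[C]_n}) PR : linear (T_R T PR).
Proof. by move=> a A B; rewrite /T_R linearP mulmxDr mulmxDl -scalemxAr -scalemxAl. Qed.

HB.instance Definition _ (T : {linear 'M[C]_n -> 'M[C]_n}) PR :=
  GRing.isLinear.Build C _ _ *:%R (T_R T PR) (T_R_is_linear T PR).

Lemma kraus_map_is_linear (Ms : seq 'M[C]_n) : linear (kraus_map Ms).
Proof.
move=> a A B; rewrite /kraus_map scaler_sumr -big_split; apply: eq_bigr => M _.
by rewrite mulmxDr mulmxDl -scalemxAr -scalemxAl.
Qed.

HB.instance Definition _ Ms :=
  GRing.isLinear.Build C _ _ *:%R (kraus_map Ms) (kraus_map_is_linear Ms).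

End LinearMaps.

Section KrausMap.
Variables (C : numClosedFieldType) (n : nat) (Ms : seq 'M[C]_n).
Local Notation T := (kraus_map Ms).

Lemma kraus_map_adj A : T (adj A) = adj (T A).
Proof. by rewrite /kraus_map raddf_sum; apply: eq_bigr => M _; rewrite /= !adjM adjK mulmxA. Qed.

Definition kraus_dual B := \sum_(M <- Ms) adj M *m B *m M.

Lemma mxtrace_kraus_dual B A : \tr (B *m T A) = \tr (kraus_dual B *m A).
Proof.
rewrite /kraus_map /kraus_dual mulmx_sumr mulmx_suml !raddf_sum.
by apply: eq_bigr => M _; rewrite /= !mulmxA mxtrace_mulC !mulmxA.
Qed.

Lemma kraus_dual_adj B : adj (kraus_dual B) = kraus_dual (adj B).
Proof. by rewrite raddf_sum; apply: eq_bigr => M _; rewrite /= !adjM adjK mulmxA. Qed.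

Lemma kraus_invariant_proj P : orth_proj P -> invariant_subspace T P ->
  forall M, M \in Ms -> M *m P = P *m M *m P.
Proof.
move=> P_proj P_inv M M_in; have [P_herm P_idem] := P_proj.
set Q := 1%:M - P; have QP0 : Q *m P = 0 := compl_mul_proj P_proj.
have Q_herm : adj Q = Q := (orth_proj_compl P_proj).1.
have TP_supp : supported_in P (T P).
  apply: P_inv; last by rewrite /supported_in !P_idem.
  by rewrite -{1}P_idem -{2}P_herm; apply: psd_mul_adj.
(* Invariance applied to rho := P: Tr ((1 - P) T(P) (1 - P)) = 0 is a sum of
   the nonnegative terms Tr (Q M P (Q M P)^dagger). *)
have : \sum_(M' <- Ms) \tr ((Q *m M' *m P) *m adj (Q *m M' *m P)) == \tr (Q *m T P *m Q).
  rewrite /kraus_map mulmx_sumr mulmx_suml raddf_sum; apply/eqP/eq_bigr => M' _.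
  by rewrite /= !adjM P_herm Q_herm !mulmxA -(mulmxA _ P P) P_idem.
rewrite -TP_supp !mulmxA QP0 !mul0mx mxtrace0.
rewrite psumr_eq0 => [/allP/(_ M M_in)/eqP/mxtrace_mul_adj_eq0|M' _].
  by rewrite /Q !mulmxBl mul1mx => /subr0_eq.
exact: mxtrace_mul_adj_ge0.
Qed.

End KrausMap.

Section Convergence.
Variable C : numClosedFieldType.
Implicit Types (u v : nat -> C) (l : C).

Lemma eq_cvg_to u v l : u =1 v -> cvg_to u l -> cvg_to v l.
Proof.
by move=> eq_uv cvg_u e e_gt0; have [N uN] := cvg_u e e_gt0; exists N => m /uN; rewrite eq_uv.
Qed.

Lemma cvg_to_cst l : cvg_to (fun=> l) l.
Proof. by move=> e e_gt0; exists 0%N => m _; rewrite subrr normr0. Qed.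

Lemma cvg_to_subr0 u l : cvg_to (fun m => u m - l) 0 -> cvg_to u l.
Proof. by move=> cvg_u e /cvg_u[N uN]; exists N => m /uN; rewrite subr0. Qed.

Lemma cvg_to0_cst l : cvg_to (fun=> l) 0 -> l = 0.
Proof.
move=> cvg_l; apply/eqP; apply: contraT; rewrite -normr_gt0 => l_gt0.
by have [N /(_ N (leqnn N))] := cvg_l _ l_gt0; rewrite subr0 ltxx.
Qed.

Lemma cvg_to0D u v : cvg_to u 0 -> cvg_to v 0 -> cvg_to (fun m => u m + v m) 0.
Proof.
move=> cvg_u cvg_v e e_gt0; have e2_gt0 : 0 < e / 2 by rewrite divr_gt0.
have [[N1 uN1] [N2 vN2]] := (cvg_u _ e2_gt0, cvg_v _ e2_gt0).
exists (maxn N1 N2) => m; rewrite geq_max => /andP[/uN1 + /vN2].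
rewrite !subr0 => ltu ltv; rewrite (splitr e).
exact: le_lt_trans (ler_normD _ _) (ltrD ltu ltv).
Qed.

Lemma cvg_to0M c u : cvg_to u 0 -> cvg_to (fun m => c * u m) 0.
Proof.
move=> cvg_u e e_gt0; have c1_gt0 : 0 < `|c| + 1 by rewrite ltr_wpDl.
have [N uN] := cvg_u _ (divr_gt0 e_gt0 c1_gt0); exists N => m /uN.
rewrite !subr0 normrM ltr_pdivlMr // => lt_u.
by apply: le_lt_trans lt_u; rewrite mulrC ler_wpM2l ?normr_ge0 // lerDl.
Qed.

Lemma cvg_to0_sum (I : Type) (r : seq I) (F : I -> nat -> C) :
  (forall i, cvg_to (F i) 0) -> cvg_to (fun m => \sum_(i <- r) F i m) 0.
Proof.
move=> cvg_F; elim: r => [|i r IHr].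
  by apply: eq_cvg_to (cvg_to_cst 0) => m; rewrite big_nil.
by apply: eq_cvg_to (cvg_to0D (cvg_F i) IHr) => m; rewrite big_cons.
Qed.
End Convergence.

Section MatrixConvergence.
Variables (C : numClosedFieldType) (n : nat).
Implicit Types (Y Z : nat -> 'M[C]_n) (A : 'M[C]_n).

Lemma eq_mx_cvg_to Y Z A : Y =1 Z -> mx_cvg_to Y A -> mx_cvg_to Z A.
Proof. by move=> eq_YZ cvgY i j; apply: eq_cvg_to (cvgY i j) => m; rewrite eq_YZ. Qed.

Lemma mx_cvg_to_cst A : mx_cvg_to (fun=> A) A.
Proof. by move=> i j; apply: cvg_to_cst. Qed.

Lemma mx_cvg_to0P Y : mx_cvg_to Y 0 <-> forall i j, cvg_to (fun m => Y m i j) 0.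
Proof. by split=> cvgY i j; have := cvgY i j; rewrite mxE. Qed.

Lemma mx_cvg_to0_cst A : mx_cvg_to (fun=> A) 0 -> A = 0.
Proof. by move/mx_cvg_to0P=> cvgA; apply/matrixP=> i j; rewrite mxE; apply: cvg_to0_cst. Qed.

Lemma mx_cvg_to0D Y Z : mx_cvg_to Y 0 -> mx_cvg_to Z 0 -> mx_cvg_to (fun m => Y m + Z m) 0.
Proof.
move=> /mx_cvg_to0P cvgY /mx_cvg_to0P cvgZ; apply/mx_cvg_to0P => i j.
by apply: eq_cvg_to (cvg_to0D (cvgY i j) (cvgZ i j)) => m; rewrite mxE.
Qed.

Lemma mx_cvg_to0Z c Y : mx_cvg_to Y 0 -> mx_cvg_to (fun m => c *: Y m) 0.
Proof.
move=> /mx_cvg_to0P cvgY; apply/mx_cvg_to0P => i j.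
by apply: eq_cvg_to (cvg_to0M c (cvgY i j)) => m; rewrite mxE.
Qed.

Lemma mx_cvg_to0_tr Y : mx_cvg_to Y 0 -> cvg_to (fun m => \tr (Y m)) 0.
Proof. by move/mx_cvg_to0P=> cvgY; apply: cvg_to0_sum => i; apply: cvgY. Qed.

Lemma mx_cvg_to0_linear (f : {linear 'M[C]_n -> 'M[C]_n}) Y :
  mx_cvg_to Y 0 -> mx_cvg_to (fun m => f (Y m)) 0.
Proof.
move=> /mx_cvg_to0P cvgY; apply/mx_cvg_to0P => i j.
have fY m : \sum_a \sum_b f (delta_mx a b) i j * Y m a b = f (Y m) i j.
  rewrite [Y m in RHS]matrix_sum_delta linear_sum summxE; apply: eq_bigr => a _.
  by rewrite linear_sum summxE; apply: eq_bigr => b _; rewrite linearZ mxE mulrC.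
apply: eq_cvg_to fY _; apply: cvg_to0_sum => a; apply: cvg_to0_sum => b.
exact: cvg_to0M.
Qed.

End MatrixConvergence.

Section DensitySpan.
Variables (C : numClosedFieldType) (n : nat) (L : nat -> 'M[C]_n -> 'M[C]_n).
Hypothesis L_linear : forall m, linear (L m).
HB.instance Definition _ m := GRing.isLinear.Build C _ _ *:%R (L m) (L_linear m).
Hypothesis L_density : forall rho, density rho -> mx_cvg_to (fun m => L m rho) 0.

Local Notation vanishes A := (mx_cvg_to (fun m => L m A) 0).

Let vanishes0 : vanishes 0.
Proof. by apply: eq_mx_cvg_to (mx_cvg_to_cst 0) => m; rewrite linear0. Qed.

Let vanishesD A B : vanishes A -> vanishes B -> vanishes (A + B).
Proof. by move=> vA vB; apply: eq_mx_cvg_to (mx_cvg_to0D vA vB) => m; rewrite linearD. Qed.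

Let vanishesZ c A : vanishes A -> vanishes (c *: A).
Proof. by move=> vA; apply: eq_mx_cvg_to (mx_cvg_to0Z c vA) => m; rewrite linearZ. Qed.

Let vanishesB A B : vanishes A -> vanishes B -> vanishes (A - B).
Proof. by move=> vA vB; rewrite -scaleN1r; apply: vanishesD => //; apply: vanishesZ. Qed.

Lemma outer_self_vanishes (u : 'cV[C]_n) : vanishes (u *m adj u).
Proof.
have [/mxtrace_mul_adj_eq0 -> | tr_neq0] := eqVneq (\tr (u *m adj u)) 0.
  by rewrite mul0mx.
set t := \tr (u *m adj u); have t_ge0 : 0 <= t := mxtrace_mul_adj_ge0 u.
have [uu_herm uu_ge0] := psd_mul_adj u.
have rho_density : density (t^-1 *: (u *m adj u)).
  split; [split=> [|v] | by rewrite mxtraceZ mulVf].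
  - by rewrite /Defs.hermitian adjZ uu_herm geC0_conj // invr_ge0.
  - by rewrite -scalemxAr -scalemxAl mxE mulr_ge0 // invr_ge0.
rewrite -[u *m adj u](scalerKV tr_neq0); exact/vanishesZ/L_density.
Qed.

Lemma outer_vanishes (u w : 'cV[C]_n) : vanishes (u *m adj w).
Proof.
have two_neq0 : (2%:R : C) != 0 by rewrite pnatr_eq0.
rewrite -[u *m adj w](scalerK two_neq0) outer_polarization.
apply/vanishesZ/vanishesD; last apply: vanishesZ.
all: by repeat apply: vanishesB; apply: outer_self_vanishes.
Qed.

Lemma mx_cvg_to0_of_density A : vanishes A.
Proof.
rewrite [A]matrix_sum_delta; elim/big_ind: _ => // a _; elim/big_ind: _ => // b _.
apply: vanishesZ; rewrite -(mul_delta_mx (0 : 'I_1)) -[delta_mx 0 b]adj_delta.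
exact: outer_vanishes.
Qed.

End DensitySpan.

Section InvariantDecomposition.
Variables (C : numClosedFieldType) (n K : nat) (Ms : seq 'M[C]_n) (P : 'I_K -> 'M[C]_n).
Hypotheses (Ms_TP : kraus_TP Ms) (P_proj : forall i, orth_proj (P i))
  (P_orth : forall i j, i != j -> P i *m P j = 0)
  (P_inv : forall i, invariant_subspace (kraus_map Ms) (P i)).
Local Notation T := (kraus_map Ms).
Let PS := \sum_(i < K) P i.
Let PR := 1%:M - PS.
Local Notation TR := (T_R T PR).

Let PS_proj : orth_proj PS := orth_proj_sum P_proj P_orth.
Let PR_proj : orth_proj PR := orth_proj_compl PS_proj.
Let PR_herm : adj PR = PR := PR_proj.1.
Let PR_idem : PR *m PR = PR := PR_proj.2.
Let PR_PS : PR *m PS = 0 := compl_mul_proj PS_proj.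
Let PR_add_PS : PR + PS = 1%:M := subrK PS 1%:M.
Let PS_P i : PS *m P i = P i := sum_proj_mul P_proj P_orth i.
Let P_PS i : P i *m PS = P i := mul_sum_proj P_proj P_orth i.

Let PR_P i : PR *m P i = 0.
Proof. by rewrite mulmxBl mul1mx PS_P subrr. Qed.

Let P_PR i : P i *m PR = 0.
Proof. by rewrite mulmxBr mulmx1 P_PS subrr. Qed.

Let PR_sandwich A : PR *m (PR *m A *m PR) *m PR = PR *m A *m PR.
Proof. by rewrite !mulmxA PR_idem -mulmxA PR_idem. Qed.

Lemma P_kraus_PS i M : M \in Ms -> P i *m M *m PS = M *m P i.
Proof.
move=> M_in; have MP j : M *m P j = P j *m M *m P j by apply: kraus_invariant_proj.
rewrite mulmx_sumr (bigD1 i) //= -MP big1 ?addr0 // => j ji.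
by rewrite -mulmxA MP !mulmxA P_orth ?mul0mx // eq_sym.
Qed.

Lemma PR_kraus M : M \in Ms -> PR *m M = PR *m M *m PR.
Proof.
move=> M_in; rewrite -{1}[PR *m M]mulmx1 -PR_add_PS mulmxDr.
rewrite mulmx_sumr big1 ?addr0 // => i _.
by rewrite -mulmxA (kraus_invariant_proj (P_proj i) (@P_inv i) M_in) !mulmxA PR_P !mul0mx.
Qed.

Lemma T_R_compress A : TR A = TR (PR *m A *m PR).
Proof.
rewrite /T_R /kraus_map !mulmx_sumr !mulmx_suml big_seq [RHS]big_seq.
apply: eq_bigr => M M_in.
have adjM_PR : adj M *m PR = PR *m adj M *m PR by rewrite -PR_herm -!adjM mulmxA -(PR_kraus M_in).
by rewrite !mulmxA PR_kraus // -!mulmxA adjM_PR !mulmxA -!(mulmxA _ PR PR) PR_idem.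
Qed.

Lemma iter_T_R m A : PR *m iter m T A *m PR = iter m TR (PR *m A *m PR).
Proof. by elim: m => [|m IHm] //=; rewrite -IHm -T_R_compress. Qed.

Lemma kraus_dual_P i : kraus_dual Ms (P i) = P i + PR *m kraus_dual Ms (P i) *m PR.
Proof.
set D := kraus_dual Ms (P i).
(* D *m PS = P i is trace preservation, through P i *m M *m PS = M *m P i. *)
have D_PS : D *m PS = P i.
  rewrite /D mulmx_suml big_seq (eq_bigr (fun M => adj M *m M *m P i)) => [|M M_in].
    by rewrite -big_seq -mulmx_suml Ms_TP mul1mx.
  by rewrite -!mulmxA (mulmxA (P i)) P_kraus_PS // mulmxA.
have PS_D : PS *m D = P i.
  have D_herm : adj D = D by rewrite kraus_dual_adj (P_proj i).1.
  by rewrite -D_herm -PS_proj.1 -adjM D_PS (P_proj i).1.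
rewrite -{1}[D]mulmx1 -PR_add_PS mulmxDr D_PS addrC; congr (_ + _).
by rewrite -{1}[D]mul1mx -PR_add_PS !mulmxDl PS_D P_PR addr0.
Qed.

Lemma mxtrace_P_kraus i A :
  \tr (P i *m T A) = \tr (P i *m A) + \tr (P i *m T (PR *m A *m PR)).
Proof.
rewrite !mxtrace_kraus_dual {1}kraus_dual_P mulmxDl mxtraceD; congr (_ + _).
by rewrite -!mulmxA mxtrace_mulC !mulmxA.
Qed.

Lemma mxtrace_P_compress i A : \tr (P i *m (PS *m A *m PS)) = \tr (P i *m A).
Proof. by rewrite !mulmxA P_PS mxtrace_mulC mulmxA PS_P. Qed.

Lemma mxtrace_P_iter i rho X : X - TR X = PR *m rho *m PR -> forall m,
  \tr (P i *m iter m T rho) =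
    \tr (P i *m rho) + \tr (P i *m T X) - \tr (P i *m T (iter m TR X)).
Proof.
move=> X_eq; elim=> [|m IHm]; first by rewrite /= addrK.
rewrite iterS mxtrace_P_kraus IHm iter_T_R -X_eq linearB /= -iterSr.
by rewrite linearB mulmxBr raddfB /= addrA subrK.
Qed.

Hypothesis S_GAS : GAS T PS.

Lemma iter_T_R_vanishes X : PR *m X *m PR = X -> mx_cvg_to (fun m => iter m TR X) 0.
Proof.
move=> X_supp.
have L_linear m : linear (fun A => PR *m iter m T A *m PR).
  exact: linearP (mulmxr PR \o mulmx PR \o iter m T).
have L_density rho : density rho -> mx_cvg_to (fun m => PR *m iter m T rho *m PR) 0.
  move=> /S_GAS/(mx_cvg_to0_linear (mulmx PR))/(mx_cvg_to0_linear (mulmxr PR)).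
  apply: eq_mx_cvg_to => m /=.
  by rewrite (mulmxBr PR) (mulmxBl _ _ PR) !mulmxA PR_PS !mul0mx subr0.
apply: eq_mx_cvg_to (mx_cvg_to0_of_density L_linear L_density X) => m.
by rewrite iter_T_R X_supp.
Qed.

Lemma T_R_fixpoint_eq0 Y : TR Y = Y -> Y = 0.
Proof.
move=> Y_fix; have Y_supp : PR *m Y *m PR = Y by rewrite -Y_fix PR_sandwich.
apply/mx_cvg_to0_cst/(eq_mx_cvg_to _ (iter_T_R_vanishes Y_supp)) => m.
by elim: m => //= m ->.
Qed.

Lemma id_minus_T_R_inj : injective (idfun \- TR).
Proof.
apply: raddf_inj => Y /= /eqP; rewrite subr_eq0 eq_sym => /eqP.
exact: T_R_fixpoint_eq0.
Qed.

Lemma T_R_adj A : TR (adj A) = adj (TR A).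
Proof. by rewrite /T_R kraus_map_adj !adjM PR_herm mulmxA. Qed.

Lemma id_minus_T_R_invertible : id_minus_TR_invertible T PR.
Proof.
move=> B [B_herm B_supp].
have [X /= X_eq] := linear_surj_of_inj id_minus_T_R_inj B.
have X_uniq Y : Y - TR Y = B -> Y = X.
  by move=> Y_eq; apply: id_minus_T_R_inj; rewrite /= Y_eq X_eq.
exists X; split=> //; last by move=> Y _ /X_uniq.
split; first by apply: X_uniq; rewrite T_R_adj -raddfB /= X_eq B_herm.
rewrite /supported_in (_ : X = B + TR X); last by rewrite -X_eq subrK.
by rewrite /T_R (mulmxDr PR) (mulmxDl _ _ PR) B_supp PR_sandwich.
Qed.

Lemma mxtrace_P_iter_cvg i rho X : PR *m X *m PR = X -> X - TR X = PR *m rho *m PR ->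
  cvg_to (fun m => \tr (P i *m iter m T rho))
    (\tr (P i *m (PS *m rho *m PS)) + \tr (P i *m T_SR T PS X)).
Proof.
move=> X_supp X_eq; apply: cvg_to_subr0.
have := iter_T_R_vanishes X_supp.
move=> /(mx_cvg_to0_linear T)/(mx_cvg_to0_linear (mulmx (P i)))/mx_cvg_to0_tr.
move=> /(cvg_to0M (-1)); apply: eq_cvg_to => m /=.
rewrite (mxtrace_P_iter i X_eq) /T_SR !mxtrace_P_compress; ring.
Qed.

End InvariantDecomposition.

Theorem proposition7 (C : numClosedFieldType) (n K : nat)
  (Ms : seq 'M[C]_n) (P : 'I_K -> 'M[C]_n) :
  kraus_TP Ms ->
  (forall i, orth_proj (P i)) ->
  (forall i j, i != j -> P i *m P j = 0) ->
  (forall i, invariant_subspace (kraus_map Ms) (P i)) ->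
  let PS := \sum_(i < K) P i in
  let PR := 1%:M - PS in
  GAS (kraus_map Ms) PS ->
  id_minus_TR_invertible (kraus_map Ms) PR /\
  forall rho : 'M[C]_n, density rho ->
  forall i : 'I_K,
  forall X : 'M[C]_n, in_HR PR X -> X - T_R (kraus_map Ms) PR X = PR *m rho *m PR ->
    cvg_to (fun m => \tr (P i *m iter m (kraus_map Ms) rho))
      (\tr (P i *m (PS *m rho *m PS)) + \tr (P i *m T_SR (kraus_map Ms) PS X)).
Proof.
move=> Ms_TP P_proj P_orth P_inv PS PR S_GAS; split.
  exact: id_minus_T_R_invertible.
move=> rho _ i X [_ X_supp] X_eq.
exact: mxtrace_P_iter_cvg.
Qed.
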